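(* Let $p$ be a prime and $b$ an integer with $0<b<p$. If $(p-b)(p-b^{-1})=2p+1$, then $|\mathrm{inv}_{1,b}|=5$.
   Context: Let $S=\mathbb{C}[x_1,x_2]$, $\zeta=e^{2\pi i/p}$, $G=\mathbb{Z}/p\mathbb{Z}=\langle\zeta\rangle$ acting on $S$ by $x_1\mapsto\zeta x_1$, $x_2\mapsto\zeta^bx_2$, with invariant ring $S^G_{1,b}$ (spanned by monomials $x_1^cx_2^d$ with $c+bd\equiv0\pmod p$). $\mathrm{inv}_{1,b}$ denotes the minimal set of monomial generators of $S^G_{1,b}$ as a $\mathbb{C}$-algebra: the nonconstant invariant monomials that are not a product of two nonconstant invariant monomials. $b^{-1}$ is the unique integer $0<b^{-1}<p$ with $bb^{-1}\equiv1\pmod p$. *)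

From mathcomp Require Import all_boot.
Set Implicit Arguments. Unset Strict Implicit. Unset Printing Implicit Defensive.

(* A monomial x1^c x2^d is encoded by its exponent pair (c, d). *)

(* x1^c x2^d is invariant under x1 |-> zeta x1, x2 |-> zeta^b x2 *)
Definition invariant_mon (p b : nat) (m : nat * nat) : bool :=
  (m.1 + b * m.2) %% p == 0.

Definition nonconst_mon (m : nat * nat) : bool := m != (0, 0).

(* m is a minimal monomial generator of S^G_{1,b}: a nonconstant invariant
   monomial that is not a product of two nonconstant invariant monomials. *)
Definition is_inv_gen (p b : nat) (m : nat * nat) : Prop :=
  [/\ invariant_mon p b m, nonconst_mon m &
   ~ exists m1 m2 : nat * nat,
       [/\ invariant_mon p b m1, nonconst_mon m1,
           invariant_mon p b m2, nonconst_mon m2 &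
           m = (m1.1 + m2.1, m1.2 + m2.2)]].

From mathcomp Require Import all_boot zify.

(* Writing p - b = 2a+1 and p - b^{-1} = 2c+1 (both odd, as their product is
   2p+1), one gets p = 2ac+a+c, and x1^x x2^y is invariant iff
   x = (2a+1)y, equivalently y = (2c+1)x (mod p).  Since an invariant monomial
   divided by an invariant divisor stays invariant, the minimal generators are
   the minimal nonconstant invariant monomials for divisibility.  The exponents
   (p,0), (2a+1,1), (a+1,c+1), (1,2c+1), (0,p) form an antichain, and every
   nonconstant invariant monomial is divisible by one of them: the two
   congruences leave no invariant point with 0 < x <= a, 0 < y <= 2c, nor with
   0 < y <= c, 0 < x <= 2a. *)

Definition mon_dvd (g m : nat * nat) : bool := (g.1 <= m.1) && (g.2 <= m.2).

Lemma mon_dvd_anti : antisymmetric mon_dvd.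
Proof. by move=> [g1 g2] [m1 m2]; rewrite /mon_dvd /= => ?; f_equal; lia. Qed.

Lemma eqn_mod_mulV d u v x y :
  u * v = 1 %[mod d] -> (x == u * y %[mod d]) = (y == v * x %[mod d]).
Proof.
have mulV u' v' x' y' :
    u' * v' = 1 %[mod d] -> x' = u' * y' %[mod d] -> y' = v' * x' %[mod d].
  move=> uv xy; rewrite -modnMmr xy modnMmr mulnA (mulnC v') -modnMml uv.
  by rewrite modnMml mul1n.
move=> uv; apply/eqP/eqP; first exact: mulV.
by apply: mulV; rewrite mulnC.
Qed.

Section MinimalGenerators.
Variables p b : nat.
Local Notation inv := (invariant_mon p b).

Lemma invariant_mon_sub g m :
  inv g -> inv m -> mon_dvd g m -> inv (m.1 - g.1, m.2 - g.2).
Proof.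
case: g m => [g1 g2] [m1 m2]; rewrite /invariant_mon /mon_dvd /= => inv_g inv_m.
case/andP=> le1 le2; have le_bg2 := leq_mul (leqnn b) le2.
have split_m : m1 + b * m2 = (m1 - g1 + b * (m2 - g2)) + (g1 + b * g2).
  by rewrite mulnBr; lia.
by move: inv_m; rewrite split_m -!/(dvdn _ _) dvdn_addl.
Qed.

Lemma is_inv_genP m :
  is_inv_gen p b m <->
  [/\ inv m, nonconst_mon m &
      forall g, inv g -> nonconst_mon g -> mon_dvd g m -> g = m].
Proof.
case: m => m1 m2.
split=> [[inv_m ncm not_split] | [inv_m ncm minm]].
  split=> // -[g1 g2] inv_g ncg gm; apply/eqP/negPn/negP => neq_gm.
  apply: not_split; exists (g1, g2), (m1 - g1, m2 - g2).
  split=> //; first exact: (@invariant_mon_sub (g1, g2) (m1, m2)).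
    by move: ncg neq_gm gm; rewrite /nonconst_mon /mon_dvd /= !xpair_eqE; lia.
  by move: gm => /andP[/= ? ?]; f_equal; lia.
split=> // -[[x1 y1] [[x2 y2] [inv1 nc1 _ nc2 [def_m1 def_m2]]]].
subst m1 m2.
have [] : (x1, y1) = (x1 + x2, y1 + y2).
  by apply: minm; rewrite // /mon_dvd /=; lia.
by move: nc2; rewrite /nonconst_mon xpair_eqE; lia.
Qed.

Variable gens : seq (nat * nat).
Hypotheses (gens_inv : all inv gens) (gens_nonconst : all nonconst_mon gens).
Hypothesis gens_antichain : {in gens &, forall g h, mon_dvd g h -> g = h}.
Hypothesis gens_cover :
  forall m, inv m -> nonconst_mon m -> has (mon_dvd^~ m) gens.

Lemma is_inv_gen_mem m : is_inv_gen p b m <-> m \in gens.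
Proof.
rewrite is_inv_genP; split=> [[inv_m ncm minm] | gm].
  by have /hasP[g gg /(minm g)<-] := gens_cover _ inv_m ncm;
     rewrite ?(allP gens_inv) ?(allP gens_nonconst).
split; [exact: (allP gens_inv) | exact: (allP gens_nonconst) |].
move=> g inv_g ncg gm_dvd; have /hasP[h hg hg_dvd] := gens_cover _ inv_g ncg.
have hm : mon_dvd h m.
  by move: hg_dvd gm_dvd; rewrite /mon_dvd => /andP[? ?] /andP[? ?]; lia.
move: hg_dvd; rewrite (gens_antichain _ _ hg gm hm) => mg_dvd.
by apply: mon_dvd_anti; rewrite gm_dvd mg_dvd.
Qed.

End MinimalGenerators.

Section ProductTwoPPlusOne.
Variables a c p : nat.
Hypotheses (a_gt0 : 0 < a) (c_gt0 : 0 < c).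
Hypothesis AC_def : (2 * a + 1) * (2 * c + 1) = 2 * p + 1.

Lemma pE : p = 2 * a * c + a + c.
Proof. lia. Qed.

Definition inv_gens : seq (nat * nat) :=
  [:: (p, 0); (2 * a + 1, 1); (a + 1, c + 1); (1, 2 * c + 1); (0, p)].

Lemma uniq_inv_gens : uniq inv_gens.
Proof. rewrite /= !inE !xpair_eqE; have := pE; nia. Qed.

Lemma inv_gens_nonconst : all nonconst_mon inv_gens.
Proof. rewrite /= /nonconst_mon !xpair_eqE; have := pE; nia. Qed.

Lemma inv_gens_antichain : {in inv_gens &, forall g h, mon_dvd g h -> g = h}.
Proof.
move=> [g1 g2] [h1 h2]; rewrite !inE !xpair_eqE /mon_dvd /= => gg hg dvd_gh.
by apply/eqP; rewrite xpair_eqE; have := pE; nia.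
Qed.

Variable b : nat.
Hypothesis b_def : b + (2 * a + 1) = p.

Lemma invariant_monE x y :
  invariant_mon p b (x, y) = (x == (2 * a + 1) * y %[mod p]).
Proof.
rewrite /invariant_mon -(eqn_modDr (b * y)) -mulnDl (addnC (2 * a + 1)) b_def.
by rewrite modnMr.
Qed.

Lemma invariant_monE_sym x y :
  invariant_mon p b (x, y) = (y == (2 * c + 1) * x %[mod p]).
Proof.
have inv_AC : (2 * a + 1) * (2 * c + 1) = 1 %[mod p].
  by rewrite AC_def modnMDl.
by rewrite invariant_monE; apply: eqn_mod_mulV.
Qed.

Lemma inv_gens_invariant : all (invariant_mon p b) inv_gens.
Proof.
have inv_of x y k : x + b * y = k * p -> invariant_mon p b (x, y).
  by rewrite /invariant_mon => ->; rewrite modnMl.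
have := pE; rewrite /= andbT => p_eq; apply/and5P; split.
- by apply: (inv_of _ _ 1); lia.
- by apply: (inv_of _ _ 1); lia.
- by apply: (inv_of _ _ c); nia.
- by apply: (inv_of _ _ (2 * c - 1)); nia.
- by apply: (inv_of _ _ b); lia.
Qed.

Lemma not_invariant_low x y :
  0 < x <= a -> 0 < y <= 2 * c -> ~~ invariant_mon p b (x, y).
Proof.
move=> hx hy; have := pE => p_eq.
have lt_cx_p : (2 * c + 1) * x < p by nia.
by rewrite invariant_monE_sym !modn_small //; nia.
Qed.

Lemma not_invariant_left x y :
  0 < y <= c -> 0 < x <= 2 * a -> ~~ invariant_mon p b (x, y).
Proof.
move=> hy hx; have := pE => p_eq.
have lt_ay_p : (2 * a + 1) * y < p by nia.
by rewrite invariant_monE !modn_small //; nia.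
Qed.

Lemma inv_gens_cover m :
  invariant_mon p b m -> nonconst_mon m -> has (mon_dvd^~ m) inv_gens.
Proof.
case: m => x y inv_xy; rewrite /nonconst_mon xpair_eqE => nz_xy.
have low := not_invariant_low x y; have left := not_invariant_left x y.
rewrite inv_xy in low left.
have x_axis : y = 0 -> x = 0 \/ p <= x.
  move=> y0; move: inv_xy; rewrite y0 invariant_monE muln0 mod0n.
  by case: (posnP x) => [|x_gt0 /(dvdn_leq x_gt0)]; [left | right].
have y_axis : x = 0 -> y = 0 \/ p <= y.
  move=> x0; move: inv_xy; rewrite x0 invariant_monE_sym muln0 mod0n.
  by case: (posnP y) => [|y_gt0 /(dvdn_leq y_gt0)]; [left | right].
by rewrite /= /mon_dvd /=; have := pE; nia.
Qed.

Lemma is_inv_gen_inv_gens m : is_inv_gen p b m <-> m \in inv_gens.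
Proof.
exact: (is_inv_gen_mem p b inv_gens inv_gens_invariant inv_gens_nonconst
          inv_gens_antichain inv_gens_cover).
Qed.

End ProductTwoPPlusOne.

Theorem proposition5p1 (p b binv : nat) :
  prime p -> 0 < b < p ->
  0 < binv < p -> (b * binv) %% p = 1 %% p ->
  (p - b) * (p - binv) = 2 * p + 1 ->
  exists s : seq (nat * nat),
    [/\ uniq s, (forall m, m \in s <-> is_inv_gen p b m) & size s = 5].
Proof.
move=> _ /andP[_ lt_bp] /andP[_ lt_binv_p] _ prodAC.
have [odd_A odd_C] : odd (p - b) /\ odd (p - binv).
  by apply/andP; rewrite -oddM prodAC oddD oddM.
have := odd_double_half (p - b); have := odd_double_half (p - binv).
rewrite odd_A odd_C -!muln2; set a := (p - b)./2; set c := (p - binv)./2.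
move=> def_C def_A.
have b_def : b + (2 * a + 1) = p by lia.
have AC_def : (2 * a + 1) * (2 * c + 1) = 2 * p + 1.
  by rewrite -prodAC; congr (_ * _); lia.
have [a_gt0 c_gt0] : 0 < a /\ 0 < c by nia.
exists (inv_gens a c p); split; [exact: uniq_inv_gens | move=> m | by []].
by symmetry; exact: is_inv_gen_inv_gens.
Qed.
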